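(* Let $\mathbf W\succ0$ be symmetric $n\times n$ and $\mathbf S\sim\mathcal D$ a random matrix in $\mathbb{R}^{n\times\tau}$. For any $\mathbf M,\mathbf N\in\mathbb{R}^{d\times n}$ and any realization of $\mathbf S$, $$\|\mathbf M(\mathbf I-\Pi_{\mathbf S})+\mathbf N\Pi_{\mathbf S}\|_{\mathbf W^{-1}}^2=\|\mathbf M(\mathbf I-\Pi_{\mathbf S})\|_{\mathbf W^{-1}}^2+\|\mathbf N\Pi_{\mathbf S}\|_{\mathbf W^{-1}}^2,$$ and $\mathbb{E}_{\mathcal D}\|\mathbf N\Pi_{\mathbf S}\|_{\mathbf W^{-1}}^2=\|\mathbf N\|^2_{\mathbb{E}_{\mathcal D}[\mathbf H_{\mathbf S}]}$. Furthermore, $$\mathbb{E}_{\mathcal D}\|\mathbf M(\mathbf I-\Pi_{\mathbf S})+\mathbf N\Pi_{\mathbf S}\|_{\mathbf W^{-1}}^2\le(1-\kappa)\|\mathbf M\|_{\mathbf W^{-1}}^2+\|\mathbf N\|^2_{\mathbb{E}_{\mathcal D}[\mathbf H_{\mathbf S}]}.$$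
   Context: $\Pi_{\mathbf S}=\mathbf S(\mathbf S^\top\mathbf W\mathbf S)^\dagger\mathbf S^\top\mathbf W$, $\mathbf H_{\mathbf S}=\mathbf S(\mathbf S^\top\mathbf W\mathbf S)^\dagger\mathbf S^\top$. For a symmetric positive semidefinite $\mathbf B$, $\|\mathbf X\|_{\mathbf B}^2=\mathrm{Tr}(\mathbf X\mathbf B\mathbf X^\top)$; in particular $\|\mathbf X\|_{\mathbf W^{-1}}^2=\mathrm{Tr}(\mathbf X\mathbf W^{-1}\mathbf X^\top)$. $\kappa=\lambda_{\min}(\mathbb{E}_{\mathcal D}[\Pi_{\mathbf S}])$ (equivalently $\lambda_{\min}(\mathbf W^{1/2}\mathbb{E}[\mathbf H_{\mathbf S}]\mathbf W^{1/2})$). *)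

From HB Require Import structures.
From mathcomp Require Import all_boot all_order all_algebra.
From mathcomp Require Import boolp classical_sets reals ereal measure lebesgue_measure lebesgue_integral probability.
Set Implicit Arguments. Unset Strict Implicit. Unset Printing Implicit Defensive.
Import Order.TTheory GRing.Theory Num.Theory.
Local Open Scope ring_scope.

Definition penrose (R : realType) (m k : nat) (A : 'M[R]_(m, k)) (X : 'M[R]_(k, m)) :=
  [/\ A *m X *m A = A, X *m A *m X = X, (A *m X)^T = A *m X & (X *m A)^T = X *m A].

(* Moore-Penrose pseudoinverse A^dagger (chosen via the Penrose conditions;
   it exists and is unique). *)
Definition pinv (R : realType) (m k : nat) (A : 'M[R]_(m, k)) : 'M[R]_(k, m) :=
  match pselect (exists X, penrose A X) with
  | left h => proj1_sig (cid h)
  | right _ => 0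
  end.

Definition spd (R : realType) (n : nat) (W : 'M[R]_n) :=
  W^T = W /\ forall x : 'rV[R]_n, x != 0 -> 0 < (x *m W *m x^T) 0 0.

Definition PiS (R : realType) (n tau : nat) (W : 'M[R]_n) (S : 'M[R]_(n, tau)) : 'M[R]_n :=
  S *m pinv (S^T *m W *m S) *m S^T *m W.
Definition HS (R : realType) (n tau : nat) (W : 'M[R]_n) (S : 'M[R]_(n, tau)) : 'M[R]_n :=
  S *m pinv (S^T *m W *m S) *m S^T.

Definition sqnormB (R : realType) (d n : nat) (B : 'M[R]_n) (X : 'M[R]_(d, n)) : R :=
  \tr (X *m B *m X^T).

Definition Emx (dT : measure_display) (T : measurableType dT) (R : realType)
  (P : probability T R) (m k : nat) (F : T -> 'M[R]_(m, k)) : 'M[R]_(m, k) :=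
  \matrix_(i, j) fine (\int[P]_w (F w i j)%:E)%E.

Definition lambda_min (R : realType) (n : nat) (A : 'M[R]_n) : R :=
  inf [set a : R | eigenvalue A a].

From HB Require Import structures.
From mathcomp Require Import all_boot all_order all_algebra.
From mathcomp Require Import boolp classical_sets reals ereal measure lebesgue_measure lebesgue_integral probability.
From mathcomp Require Import ring lra.
From mathcomp Require Import topology normedtype derive matrix_normedtype measurable_realfun.
Set Implicit Arguments. Unset Strict Implicit. Unset Printing Implicit Defensive.
Import Order.TTheory GRing.Theory Num.Theory.
Import numFieldTopology.Exports numFieldNormedType.Exports.
Local Open Scope ring_scope.

(* Write V := W^-1 and H := H_S.  The Penrose identity H W H = H gives
   Pi_S V Pi_S^T = H and (I - Pi_S) V Pi_S^T = 0, hence the Pythagorean split,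
   ||N Pi_S||_V^2 = ||N||_H^2 and ||M (I - Pi_S)||_V^2 = ||M||_V^2 - ||M||_H^2.
   These are linear in H, so the expectation passes inside and replaces H by
   E[H].  Finally, by compactness of the unit sphere the generalized Rayleigh
   quotient x E[H] x^T / x V x^T attains its minimum, at an eigenvector of
   E[H] W = E[Pi_S]; so kappa is at most that minimum, and summing over the
   rows of M gives kappa ||M||_V^2 <= ||M||_E[H]^2. *)

Section Pseudoinverse.
Variables (R : realType) (k : nat).
Implicit Types A X Y : 'M[R]_k.

Lemma penrose_uniq A X Y : penrose A X -> penrose A Y -> X = Y.
Proof.
move=> [AXA XAX AXs XAs] [AYA YAY AYs YAs].
have AXE : A *m X = X^T *m A^T by rewrite -trmx_mul AXs.
have AYE : A *m Y = Y^T *m A^T by rewrite -trmx_mul AYs.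
have XAE : X *m A = A^T *m X^T by rewrite -trmx_mul XAs.
have YAE : Y *m A = A^T *m Y^T by rewrite -trmx_mul YAs.
have eX : X = X *m A *m Y.
  transitivity (X *m (X^T *m A^T)); first by rewrite -AXE mulmxA XAX.
  transitivity (X *m (X^T *m (A^T *m Y^T *m A^T))).
    by rewrite -!trmx_mul mulmxA AYA.
  transitivity (X *m (A *m X) *m (A *m Y)); first by rewrite AXE AYE !mulmxA.
  by rewrite !mulmxA XAX.
have eY : Y = X *m A *m Y.
  transitivity (A^T *m Y^T *m Y); first by rewrite -YAE YAY.
  transitivity (A^T *m X^T *m A^T *m Y^T *m Y).
    by rewrite -{1}AXA !trmx_mul !mulmxA.
  transitivity (X *m A *m (Y *m A) *m Y); first by rewrite XAE YAE !mulmxA.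
  by rewrite -mulmxA YAY.
by rewrite eX -eY.
Qed.

Lemma penrose_trmx A X : A^T = A -> penrose A X -> penrose A X^T.
Proof.
move=> sA [AXA XAX AXs XAs]; split.
- by move: (congr1 trmx AXA); rewrite !trmx_mul sA mulmxA.
- by move: (congr1 trmx XAX); rewrite !trmx_mul sA mulmxA.
- by rewrite trmx_mul trmxK sA -{2}sA -trmx_mul XAs.
- by rewrite trmx_mul trmxK sA -{2}sA -trmx_mul AXs.
Qed.

Lemma pinv_sym A : A^T = A -> (pinv A)^T = pinv A.
Proof.
rewrite /pinv => sA; case: pselect => [h|_]; last exact: trmx0.
by case: (cid h) => X /= AX; exact: penrose_uniq (penrose_trmx sA AX) AX.
Qed.

Lemma mulmx_pinvK A : pinv A *m A *m pinv A = pinv A.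
Proof.
rewrite /pinv; case: pselect => [h|_]; last by rewrite !mul0mx.
by case: (cid h) => X /= [].
Qed.

End Pseudoinverse.

Section SketchProjection.
Variables (R : realType) (n tau : nat) (W : 'M[R]_n) (S : 'M[R]_(n, tau)).
Local Notation V := (invmx W).
Local Notation H := (HS W S).
Local Notation Pi := (PiS W S).

Lemma HS_mulmxK : H *m W *m H = H.
Proof.
rewrite /HS -[in RHS]mulmx_pinvK.
by rewrite -!mulmxA; do 2!congr (_ *m _); rewrite !mulmxA.
Qed.

Hypotheses (sW : W^T = W) (uW : W \in unitmx).

Lemma HS_sym : H^T = H.
Proof.
have sSWS : (S^T *m W *m S)^T = S^T *m W *m S by rewrite !trmx_mul trmxK sW mulmxA.
by rewrite /HS !trmx_mul trmxK pinv_sym // mulmxA.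
Qed.

Lemma PiS_invmx : Pi *m V = H.
Proof. exact: mulmxK. Qed.

Lemma invmx_trPiS : V *m Pi^T = H.
Proof. by rewrite -[V]trmxK trmx_inv sW -trmx_mul PiS_invmx HS_sym. Qed.

Lemma PiS_invmx_trPiS : Pi *m V *m Pi^T = H.
Proof. by rewrite PiS_invmx /PiS trmx_mul sW HS_sym -/H mulmxA HS_mulmxK. Qed.

Lemma PiSC_invmx_trPiS : (1%:M - Pi) *m V *m Pi^T = 0.
Proof. by rewrite !mulmxBl mul1mx invmx_trPiS PiS_invmx_trPiS subrr. Qed.

Lemma PiS_invmx_trPiSC : Pi *m V *m (1%:M - Pi)^T = 0.
Proof.
by rewrite [(1%:M - Pi)^T]linearB /= trmx1 mulmxBr mulmx1 PiS_invmx_trPiS PiS_invmx subrr.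
Qed.

Lemma PiSC_invmx_trPiSC : (1%:M - Pi) *m V *m (1%:M - Pi)^T = V - H.
Proof.
rewrite [(1%:M - Pi)^T]linearB /= trmx1 mulmxBr mulmx1 !mulmxBl mul1mx.
by rewrite PiS_invmx_trPiS PiS_invmx invmx_trPiS subrr subr0.
Qed.

End SketchProjection.

Section QuadraticForm.
Variable R : comNzRingType.

Definition bform m (B : 'M[R]_m) (x z : 'rV[R]_m) := (x *m B *m z^T) 0 0.
Definition qform m (B : 'M[R]_m) (x : 'rV[R]_m) := bform B x x.

Variable m : nat.
Implicit Types (B : 'M[R]_m) (x z : 'rV[R]_m).

Lemma bform_sym B x z : B^T = B -> bform B x z = bform B z x.
Proof.
move=> sB; rewrite /bform; have <- : (z *m B *m x^T)^T = x *m B *m z^T.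
  by rewrite !trmx_mul trmxK sB mulmxA.
by rewrite mxE.
Qed.

Lemma bform_delta B i j : bform B (delta_mx 0 i) (delta_mx 0 j) = B i j.
Proof. by rewrite /bform -rowE trmx_delta -colE !mxE. Qed.

Lemma qform_delta B i : qform B (delta_mx 0 i) = B i i.
Proof. exact: bform_delta. Qed.

Lemma qform0 B : qform B 0 = 0.
Proof. by rewrite /qform /bform !mul0mx mxE. Qed.

Lemma qformZ B a x : qform B (a *: x) = a ^+ 2 * qform B x.
Proof.
by rewrite /qform /bform linearZ /= -!scalemxAl -scalemxAr scalerA !mxE expr2.
Qed.

Lemma qform_addZ B x z t : B^T = B ->
  qform B (x + t *: z) = qform B x + 2 * t * bform B x z + t ^+ 2 * qform B z.
Proof.
move=> sB; have := bform_sym x z sB; rewrite /qform /bform => zx.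
rewrite linearD linearZ /= !mulmxDl !mulmxDr -!scalemxAl -!scalemxAr scalerA.
by rewrite !mxE in zx *; rewrite zx; ring.
Qed.

Lemma qform_mulmx k (B : 'M[R]_m) (x : 'rV[R]_k) (A : 'M[R]_(k, m)) :
  qform B (x *m A) = qform (A *m B *m A^T) x.
Proof. by rewrite /qform /bform trmx_mul !mulmxA. Qed.

End QuadraticForm.

Section Semidefinite.
Variable R : realFieldType.

Definition psd m (B : 'M[R]_m) := forall x, 0 <= qform B x.

Variable m : nat.
Implicit Types (B : 'M[R]_m) (x z : 'rV[R]_m).

Lemma psd_diag_ge0 B i : psd B -> 0 <= B i i.
Proof. by move=> /(_ (delta_mx 0 i)); rewrite qform_delta. Qed.

Lemma psd_entry_bound B i j : B^T = B -> psd B -> 2 * `|B i j| <= B i i + B j j.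
Proof.
move=> sB pB; have := pB (delta_mx 0 i + 1 *: delta_mx 0 j).
have := pB (delta_mx 0 i + (-1) *: delta_mx 0 j).
rewrite !qform_addZ // !qform_delta bform_delta.
by case: (ler0P (B i j)) => _; lra.
Qed.

Lemma dotmx_self_eq0 z : (z *m z^T) 0 0 = 0 -> z = 0.
Proof.
rewrite mxE => /eqP; rewrite psumr_eq0 => [/allP z0|j _]; last first.
  by rewrite mxE -expr2 sqr_ge0.
apply/rowP => j; rewrite mxE; have /implyP := z0 j (mem_index_enum j).
by rewrite mxE -expr2 sqrf_eq0 => /(_ isT) /eqP.
Qed.

Lemma psd_qform_eq0 B c : B^T = B -> psd B -> qform B c = 0 -> c *m B = 0.
Proof.
(* Expand the nonnegative form along c + t z with z := c B; the choice
   t := - s / (a + 1) forces s = z z^T = 0. *)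
move=> sB pB Bc0; apply: dotmx_self_eq0; set z := c *m B.
set s := (z *m z^T) 0 0; set a := qform B z.
have a0 : 0 <= a := pB z.
have key t : 0 <= 2 * t * s + t ^+ 2 * a.
  by have := pB (c + t *: z); rewrite qform_addZ // Bc0 add0r.
have a1 : a + 1 != 0 by rewrite gt_eqF // ltr_wpDl.
have : s ^+ 2 * (a + 2) <= 0.
  have -> : s ^+ 2 * (a + 2) =
      - (a + 1) ^+ 2 * (2 * (- s / (a + 1)) * s + (- s / (a + 1)) ^+ 2 * a).
    by field.
  by rewrite mulNr oppr_le0 mulr_ge0 ?sqr_ge0.
nra.
Qed.

End Semidefinite.

Section WeightedNorm.
Variables (R : realType) (d m : nat).
Implicit Types (B : 'M[R]_m) (M N : 'M[R]_(d, m)).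

Lemma sqnormB_qform B M : sqnormB B M = \sum_k qform B (row k M).
Proof.
rewrite /sqnormB /mxtrace; apply: eq_bigr => k _.
by rewrite /qform /bform -row_mul tr_row !mxE; apply: eq_bigr => l _; rewrite !mxE.
Qed.

Lemma sqnormB_mulmx k (B : 'M[R]_k) M (A : 'M[R]_(m, k)) :
  sqnormB B (M *m A) = sqnormB (A *m B *m A^T) M.
Proof. by rewrite /sqnormB trmx_mul !mulmxA. Qed.

Lemma sqnormB_linear M : linear_for *%R (fun B : 'M[R]_m => sqnormB B M).
Proof.
move=> a A B; rewrite /sqnormB mulmxDr mulmxDl mxtraceD.
by rewrite -scalemxAr -scalemxAl mxtraceZ.
Qed.

Lemma sqnormB_add_orth B (P Q : 'M[R]_m) M N :
  P *m B *m Q^T = 0 -> Q *m B *m P^T = 0 ->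
  sqnormB B (M *m P + N *m Q) = sqnormB B (M *m P) + sqnormB B (N *m Q).
Proof.
move=> PQ QP; rewrite /sqnormB linearD /= !(mulmxDl, mulmxDr) !mxtraceD !trmx_mul.
have cross (X Y : 'M[R]_(d, m)) (U V : 'M[R]_m) :
    U *m B *m V^T = 0 -> X *m U *m B *m (V^T *m Y^T) = 0.
  by move=> UV; rewrite -!mulmxA (mulmxA U) (mulmxA _ V^T) UV mul0mx mulmx0.
by rewrite (cross _ _ _ _ PQ) (cross _ _ _ _ QP) mxtrace0 addr0 add0r.
Qed.

End WeightedNorm.

Section SymmetricPositive.
Variable R : realType.

Lemma spd_unitmx m (W : 'M[R]_m) : spd W -> W \in unitmx.
Proof.
move=> [_ pW]; rewrite -row_free_unit; apply: inj_row_free => v vW0.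
apply/eqP; apply: contraT => /pW.
by rewrite vW0 mul0mx mxE ltxx.
Qed.

Lemma spd_psd m (W : 'M[R]_m) : spd W -> psd W.
Proof.
move=> [_ pW] x; have [->|/pW/ltW //] := eqVneq x 0.
by rewrite qform0.
Qed.

Lemma spd_invmx m (W : 'M[R]_m) : spd W -> spd (invmx W).
Proof.
move=> hW; have [sW pW] := hW; have uW := spd_unitmx hW.
have sV : (invmx W)^T = invmx W by rewrite trmx_inv sW.
split=> // x x0; change (0 < qform (invmx W) x).
have -> : invmx W = invmx W *m W *m (invmx W)^T by rewrite sV mulVmx // mul1mx.
rewrite -qform_mulmx; apply: pW; apply: contra x0 => /eqP xV0.
by rewrite -[x](mulmxKV uW) xV0 mul0mx.
Qed.

Section SketchProjectionPsd.
Variables (n tau : nat) (W : 'M[R]_n) (S : 'M[R]_(n, tau)).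
Hypothesis hW : spd W.

Lemma HS_psd : psd (HS W S).
Proof.
move=> x; rewrite -HS_mulmxK -[X in _ *m X](HS_sym _ hW.1) -qform_mulmx.
exact: spd_psd.
Qed.

Lemma invmx_HS_psd : psd (invmx W - HS W S).
Proof.
move=> x; rewrite -(PiSC_invmx_trPiSC _ hW.1 (spd_unitmx hW)) -qform_mulmx.
exact/spd_psd/spd_invmx.
Qed.

Lemma HS_entry_bound i j : `|HS W S i j| <= invmx W i i + invmx W j j.
Proof.
have := psd_entry_bound i j (HS_sym _ hW.1) HS_psd.
have := psd_diag_ge0 i invmx_HS_psd; have := psd_diag_ge0 j invmx_HS_psd.
have := psd_diag_ge0 i HS_psd; have := psd_diag_ge0 j HS_psd.
rewrite !mxE; lra.
Qed.

End SketchProjectionPsd.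

End SymmetricPositive.

Section RayleighQuotient.
Local Open Scope classical_set_scope.
Variables (R : realType) (m : nat).
Implicit Types (B V : 'M[R]_m) (x y : 'rV[R]_m).

Lemma qform_continuous B : continuous (qform B).
Proof.
have -> : qform B = fun x => \sum_j (\sum_i x 0 i * B i j) * x 0 j.
  by apply: funext => x; rewrite /qform /bform mxE; apply: eq_bigr => j _; rewrite !mxE.
apply: (continuous_big add_continuous) => j _ x.
apply: continuousM; last exact: coord_continuous.
apply: (continuous_big add_continuous) => i _ y.
apply: continuousM; first exact: coord_continuous.
exact: cst_continuous.
Qed.

Let sphere := [set x : 'rV[R]_m | `|x| = 1].

Let sphere_compact : compact sphere.
Proof.
apply: bounded_closed_compact.
  by rewrite /= /bounded_near; near=> M => x /= ->; near: M; exact: nbhs_pinfty_ge.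
have -> : sphere = Num.norm @^-1` [set 1] by [].
by apply: (proj1 (continuous_closedP _)); [exact: norm_continuous | exact: closed_eq].
Unshelve. all: end_near. Qed.

Let normalize_in_sphere y : y != 0 -> sphere (`|y|^-1 *: y).
Proof.
move=> y0; rewrite /sphere /= normrZ normrV ?unitfE ?normr_eq0 //.
by rewrite normr_id mulVf ?normr_eq0.
Qed.

Lemma rayleigh_min B V : (0 < m)%N -> spd V ->
  exists mu, (exists2 c, c != 0 & qform B c = mu * qform V c) /\
             forall y, mu * qform V y <= qform B y.
Proof.
move=> m0 [_ pV]; pose f x := qform B x / qform V x.
have f_scale a y : a != 0 -> f (a *: y) = f y.
  by move=> a0; rewrite /f !qformZ -mulf_div divff ?mul1r // expf_neq0.
have nz_sphere x : sphere x -> x != 0.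
  rewrite /sphere /= => x1; apply/eqP => x0; move: x1.
  by rewrite x0 normr0 => /esym/eqP; rewrite oner_eq0.
pose e : 'rV[R]_m := const_mx 1.
have e0 : e != 0.
  by apply/eqP => /rowP /(_ (Ordinal m0)); rewrite !mxE; apply/eqP; exact: oner_neq0.
have f_cont : {within sphere, continuous f}.
  apply: continuous_in_subspaceT => x; rewrite inE => /nz_sphere /pV /lt0r_neq0 Vx0.
  have := continuousM (@qform_continuous B x) (continuousV Vx0 (@qform_continuous V x)).
  exact.
have [|c cS cmin] := EVT_min_rV _ sphere_compact f_cont.
  by exists (`|e|^-1 *: e); exact: normalize_in_sphere.
have /nz_sphere c0 : sphere c by rewrite inE in cS.
exists (f c); split; first by exists c; rewrite // divfK // lt0r_neq0 // pV.
move=> y; have [->|y0] := eqVneq y 0; first by rewrite !qform0 mulr0.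
have := cmin (`|y|^-1 *: y); rewrite inE f_scale ?invr_eq0 ?normr_eq0 //.
by rewrite ler_pdivlMr ?pV //; apply; exact: normalize_in_sphere.
Qed.

Lemma rayleigh_min_eigenvector B V : (0 < m)%N -> B^T = B -> spd V ->
  exists mu, (exists2 x : 'rV[R]_m, x != 0 & x *m B = mu *: (x *m V)) /\
             forall y, mu * qform V y <= qform B y.
Proof.
move=> m0 sB hV; have [mu [[c c0 Bc] minB]] := rayleigh_min B m0 hV.
exists mu; split=> //; exists c => //.
have qD y : qform (B - mu *: V) y = qform B y - mu * qform V y.
  by rewrite /qform /bform mulmxBr mulmxBl -scalemxAr -scalemxAl !mxE.
have Dsym : (B - mu *: V)^T = B - mu *: V by rewrite linearB linearZ /= sB hV.1.
have Dpsd : psd (B - mu *: V) by move=> y; rewrite qD subr_ge0.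
have Dc : qform (B - mu *: V) c = 0 by rewrite qD Bc subrr.
have /eqP := psd_qform_eq0 Dsym Dpsd Dc.
by rewrite mulmxBr -scalemxAr subr_eq0 => /eqP.
Qed.

Lemma lambda_min_le_rayleigh B W y : B^T = B -> spd W ->
  lambda_min (B *m W) * qform (invmx W) y <= qform B y.
Proof.
move=> sB hW; have uW := spd_unitmx hW; have hV := spd_invmx hW.
case: (posnP m) => [m0|m0].
  by move: y B W {sB hW uW hV}; rewrite m0 => y *; rewrite [y]thinmx0 !qform0 mulr0.
have [mu [[x x0 xB] minB]] := rayleigh_min_eigenvector m0 sB hV.
have eig_ge a : eigenvalue (B *m W) a -> mu <= a.
  move=> /eigenvalueP [v vBW v0]; have qV := hV.2 v v0.
  have vB : v *m B = a *: (v *m invmx W).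
    by rewrite -[v *m B](mulmxK uW) -(mulmxA v) vBW -scalemxAl.
  have qB : qform B v = a * qform (invmx W) v by rewrite /qform /bform vB -scalemxAl mxE.
  by rewrite -(ler_pM2r qV) -qB minB.
have eig_mu : eigenvalue (B *m W) mu.
  by apply/eigenvalueP; exists x => //; rewrite mulmxA xB -scalemxAl mulmxKV.
apply: le_trans (minB y); apply: ler_wpM2r; first exact/spd_psd.
by apply: ge_inf => //; exists mu => a /eig_ge.
Qed.

End RayleighQuotient.

Lemma lambda_min_le_sqnormB (R : realType) d m (B W : 'M[R]_m) (M : 'M[R]_(d, m)) :
  B^T = B -> spd W -> lambda_min (B *m W) * sqnormB (invmx W) M <= sqnormB B M.
Proof.
move=> sB hW; rewrite !sqnormB_qform mulr_sumr.
by apply: ler_sum => k _; exact: lambda_min_le_rayleigh.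
Qed.

Lemma linear_mx_sum_delta (R : pzRingType) m k (g : 'M[R]_(m, k) -> R) :
  linear_for *%R g -> forall X, g X = \sum_i \sum_j X i j * g (delta_mx i j).
Proof.
move=> lin X.
have g0 : g 0 = 0 by have := lin (-1) 0 0; rewrite scaler0 add0r mulN1r addNr.
have gD A B : g (A + B) = g A + g B by rewrite -[A in LHS]scale1r lin mul1r.
rewrite {1}(matrix_sum_delta X) (big_morph g gD g0); apply: eq_bigr => i _.
rewrite (big_morph g gD g0); apply: eq_bigr => j _.
by rewrite -[_ *: _]addr0 lin g0 addr0.
Qed.

Section Expectation.
Variables (R : realType) (dT : measure_display) (T : measurableType dT) (P : probability T R).
Local Open Scope ereal_scope.

Lemma Emx_entry m k (F : T -> 'M[R]_(m, k)) i j :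
  P.-integrable setT (EFin \o (fun w => F w i j)) ->
  (Emx P F i j)%:E = \int[P]_w (F w i j)%:E.
Proof. by move=> iF; rewrite mxE fineK //; exact: integrable_fin_num iF. Qed.

Lemma integral_affine_mx m k (F : T -> 'M[R]_(m, k)) (g : 'M[R]_(m, k) -> R) (c : R) :
  linear_for *%R g -> (forall i j, P.-integrable setT (EFin \o (fun w => F w i j))) ->
  \int[P]_w (c + g (F w))%:E = (c + g (Emx P F))%:E.
Proof.
move=> lin iF; have gE := linear_mx_sum_delta lin.
have iFG i j : P.-integrable setT (fun w => (F w i j)%:E * (g (delta_mx i j))%:E).
  exact: integrableZr (iF i j).
have EFG i j : \int[P]_w ((F w i j)%:E * (g (delta_mx i j))%:E)
               = (Emx P F i j)%:E * (g (delta_mx i j))%:E.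
  by rewrite Emx_entry // integralZr //; exact: iF.
transitivity (\int[P]_w (c%:E + \sum_i \sum_j (F w i j)%:E * (g (delta_mx i j))%:E)).
  apply: eq_integral => w _; rewrite gE EFinD -sumEFin; congr (_ + _).
  by apply: eq_bigr => i _; rewrite -sumEFin; apply: eq_bigr => j _; rewrite EFinM.
rewrite integralD //; last 2 first.
- exact: finite_measure_integrable_cst.
- by apply: integrable_sum => // i _; exact: integrable_sum.
rewrite integral_cst // [X in _ * X](_ : _ = 1) ?mule1; last exact: probability_setT.
rewrite integral_sum //; last first.
  by move=> i; exact: integrable_sum.
rewrite [in RHS]gE EFinD -sumEFin; congr (_ + _); apply: eq_bigr => i _.
by rewrite integral_sum // -sumEFin; apply: eq_bigr => j _; rewrite EFG EFinM.
Qed.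

Lemma integral_linear_mx m k (F : T -> 'M[R]_(m, k)) (g : 'M[R]_(m, k) -> R) :
  linear_for *%R g -> (forall i j, P.-integrable setT (EFin \o (fun w => F w i j))) ->
  \int[P]_w (g (F w))%:E = (g (Emx P F))%:E.
Proof.
move=> lin iF; rewrite -[g (Emx P F)]add0r -(integral_affine_mx 0 lin iF).
by apply: eq_integral => w _; rewrite add0r.
Qed.

Lemma Emx_mulmxr m k l (F : T -> 'M[R]_(m, k)) (A : 'M[R]_(k, l)) :
  (forall i j, P.-integrable setT (EFin \o (fun w => F w i j))) ->
  Emx P (fun w => F w *m A) = Emx P F *m A.
Proof.
move=> iF; apply/matrixP => i j.
have lin : linear_for *%R (fun X : 'M[R]_(m, k) => (X *m A) i j).
  by move=> a X Y; rewrite mulmxDl -scalemxAl !mxE.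
by rewrite [LHS]mxE (integral_linear_mx lin iF).
Qed.

Lemma Emx_trmx m k (F : T -> 'M[R]_(m, k)) : Emx P (fun w => (F w)^T) = (Emx P F)^T.
Proof. by apply/matrixP => i j; rewrite !mxE; under eq_integral do rewrite mxE. Qed.

Lemma bounded_integrable (f : T -> R) (b : R) :
  measurable_fun setT f -> (forall w, `|f w| <= b)%R -> P.-integrable setT (EFin \o f).
Proof.
move=> mf fb; apply: measurable_bounded_integrable => //.
  by rewrite [X in X < _](_ : _ = 1) ?ltry //; exact: probability_setT.
rewrite /bounded_near; near=> M => w _ /=; apply: le_trans (fb w) _.
by near: M; exact: nbhs_pinfty_ge (num_real b).
Unshelve. all: end_near. Qed.

Lemma HS_integrable n tau (W : 'M[R]_n) (S : T -> 'M[R]_(n, tau)) : spd W ->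
  (forall i j, measurable_fun setT (fun w => PiS W (S w) i j)) ->
  forall i j, P.-integrable setT (EFin \o (fun w => HS W (S w) i j)).
Proof.
move=> hW mPi i j; apply: (@bounded_integrable _ (invmx W i i + invmx W j j)); last first.
  by move=> w; exact: HS_entry_bound.
have -> : (fun w => HS W (S w) i j) = (fun w => \sum_l PiS W (S w) i l * invmx W l j)%R.
  by apply: funext => w; rewrite -(PiS_invmx (S w) (spd_unitmx hW)) mxE.
apply: measurable_sum => l; apply: measurable_funM => //; exact: measurable_cst.
Qed.

End Expectation.

Theorem lemma3p8 (R : realType) (dT : measure_display) (T : measurableType dT)
  (P : probability T R) (n tau d : nat) (W : 'M[R]_n) (S : T -> 'M[R]_(n, tau))
  (M N : 'M[R]_(d, n)) :
  spd W ->
  (forall i j, measurable_fun setT (fun w => S w i j)) ->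
  (forall i j, measurable_fun setT (fun w => PiS W (S w) i j)) ->
  let kappa := lambda_min (Emx P (fun w => PiS W (S w))) in
  let EH := Emx P (fun w => HS W (S w)) in
  (forall w,
     sqnormB (invmx W) (M *m (1%:M - PiS W (S w)) + N *m PiS W (S w))
     = sqnormB (invmx W) (M *m (1%:M - PiS W (S w)))
       + sqnormB (invmx W) (N *m PiS W (S w)))
  /\ (\int[P]_w (sqnormB (invmx W) (N *m PiS W (S w)))%:E)%E = (sqnormB EH N)%:E
  /\ (\int[P]_w (sqnormB (invmx W) (M *m (1%:M - PiS W (S w)) + N *m PiS W (S w)))%:E
      <= ((1 - kappa) * sqnormB (invmx W) M + sqnormB EH N)%:E)%E.
Proof.
move=> hW _ mPi kappa EH; have [sW uW] := (hW.1, spd_unitmx hW).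
have iH := HS_integrable P hW mPi.
have pythagoras w :
    sqnormB (invmx W) (M *m (1%:M - PiS W (S w)) + N *m PiS W (S w))
    = sqnormB (invmx W) (M *m (1%:M - PiS W (S w))) + sqnormB (invmx W) (N *m PiS W (S w)).
  by apply: sqnormB_add_orth; [exact: PiSC_invmx_trPiS | exact: PiS_invmx_trPiSC].
have normN w : sqnormB (invmx W) (N *m PiS W (S w)) = sqnormB (HS W (S w)) N.
  by rewrite sqnormB_mulmx PiS_invmx_trPiS.
have normM w : sqnormB (invmx W) (M *m (1%:M - PiS W (S w)))
    = sqnormB (invmx W) M - sqnormB (HS W (S w)) M.
  by rewrite sqnormB_mulmx PiSC_invmx_trPiSC // (zmod_morphism_linear (sqnormB_linear M)).
have EPi : Emx P (fun w => PiS W (S w)) = EH *m W by rewrite -Emx_mulmxr.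
have EHsym : EH^T = EH.
  by rewrite -Emx_trmx; congr Emx; apply: funext => w; exact: HS_sym.
split=> //; split.
  under eq_integral do rewrite normN.
  exact: integral_linear_mx (sqnormB_linear N) iH.
pose g X := sqnormB X N - sqnormB X M.
have lin_g : linear_for *%R g.
  by move=> a X Y; rewrite /g (sqnormB_linear N a X Y) (sqnormB_linear M a X Y); ring.
rewrite (eq_integral (fun w => (sqnormB (invmx W) M + g (HS W (S w)))%:E)); last first.
  by move=> w _; rewrite pythagoras normM normN /g; congr _%:E; ring.
rewrite (integral_affine_mx _ lin_g iH) lee_fin /g.
have := lambda_min_le_sqnormB M EHsym hW; rewrite -EPi -/kappa; lra.
Qed.
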